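(* Let $\pi,\tau\in\mathfrak{S}_m$. If $\pi$ and $\tau$ are strongly c-Wilf equivalent, then $\mathcal{O}_\pi=\mathcal{O}_\tau$.
   Context: $\mathfrak{S}_n$ is the symmetric group on $[n]$. The standardization $\operatorname{st}(w)$ of a word of distinct integers replaces its smallest entry by 1, the next smallest by 2, etc. For $\pi\in\mathfrak{S}_m$ and $\sigma\in\mathfrak{S}_n$, $\operatorname{Em}(\pi,\sigma)=\{i\in[n-m+1]:\operatorname{st}(\sigma_i\cdots\sigma_{i+m-1})=\pi\}$. Let $a^\pi_{n,k}$ be the number of $\sigma\in\mathfrak{S}_n$ with $|\operatorname{Em}(\pi,\sigma)|=k$; $\pi$ and $\tau$ are strongly c-Wilf equivalent if $a^\pi_{n,k}=a^\tau_{n,k}$ for all $n,k$. The overlap set is $\mathcal{O}_\pi=\{i\in[m-1]:\operatorname{st}(\pi_{i+1}\cdots\pi_m)=\operatorname{st}(\pi_1\cdots\pi_{m-i})\}$. *)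

From mathcomp Require Import all_boot all_order all_fingroup.
Set Implicit Arguments. Unset Strict Implicit. Unset Printing Implicit Defensive.

(* Conventions: permutations of [n] are represented by 'S_n (permutations of
   'I_n = {0,..,n-1}); positions and values are shifted down by one (0-based).
   This shift does not affect standardization or equality of patterns. *)

Definition word {n : nat} (s : 'S_n) : seq nat := [seq val (s i) | i <- enum 'I_n].

(* For words with
   distinct entries this is the usual standardization, shifted by one. *)
Definition st (w : seq nat) : seq nat := [seq count (fun y => y < x) w | x <- w].

Definition factor (w : seq nat) (i m : nat) : seq nat := take m (drop i w).

Definition Em {m n : nat} (p : 'S_m) (s : 'S_n) : seq nat :=
  [seq i <- iota 0 (n - m + 1) | (m <= n) && (st (factor (word s) i m) == word p)].

Definition a_count {m : nat} (p : 'S_m) (n k : nat) : nat :=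
  #|[set s : 'S_n | size (Em p s) == k]|.

Definition strongly_cWilf_equiv {m : nat} (p t : 'S_m) : Prop :=
  forall n k : nat, a_count p n k = a_count t n k.

(* overlap set O_pi = {i in [m-1] : st(pi_{i+1}..pi_m) = st(pi_1..pi_{m-i})} *)
Definition overlap_set {m : nat} (p : 'S_m) : {set 'I_m} :=
  [set i : 'I_m | (0 < val i) &&
     (st (drop i (word p)) == st (take (m - i) (word p)))].

(* Strong c-Wilf equivalence fixes, for every e, the second moment
   sum_s |Em(pi, s)|^2 over permutations s of length m + e, which counts the
   ordered pairs of occurrences (j, j').  The patterns seen in a fixed window are
   equidistributed over all permutations, so the pairs (j, j + e) are counted by
   the overlap count at e (permutations of length m + e with occurrences at 0
   and e) times a factor independent of the pattern.  By induction on e the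
   overlap counts of pi and tau agree: terms at smaller distance already agree,
   every term is monotone in the overlap counts, so equal sums force equality at
   distance e.  Finally d lies in the overlap set iff the overlap count at d is
   positive, since two copies of a pattern shifted by d can be merged into one
   permutation exactly when they order their common window alike. *)

From mathcomp Require Import all_boot all_order all_fingroup.
From mathcomp Require Import zify.
Set Implicit Arguments. Unset Strict Implicit. Unset Printing Implicit Defensive.

Lemma size_word n (s : 'S_n) : size (word s) = n.
Proof. by rewrite size_map size_enum_ord. Qed.

Lemma nth_word n (s : 'S_n) (i : 'I_n) : nth 0 (word s) i = s i.
Proof. by rewrite (nth_map i) ?size_enum_ord // nth_ord_enum. Qed.

Lemma word_uniq n (s : 'S_n) : uniq (word s).
Proof. by rewrite map_inj_uniq ?enum_uniq // => i j /val_inj/perm_inj. Qed.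

Lemma word_inj n : injective (@word n).
Proof.
move=> s t eq_st; apply/permP => i; apply: val_inj.
by rewrite /= -!nth_word eq_st.
Qed.

Lemma word_perm_iota n (s : 'S_n) : perm_eq (word s) (iota 0 n).
Proof.
apply: uniq_perm; rewrite ?word_uniq ?iota_uniq // => x.
rewrite /word mem_iota leq0n add0n /=; apply/mapP/idP => [[i _ ->] // | lt_xn].
by exists (s^-1 (Ordinal lt_xn))%g; rewrite ?mem_enum ?permKV.
Qed.

Lemma word_mul n (s t : 'S_n) : word (s * t) = [seq nth 0 (word t) i | i <- word s].
Proof. by rewrite -map_comp; apply: eq_map => i /=; rewrite nth_word permM. Qed.

Definition rank (v : seq nat) (x : nat) : nat := count (fun y => y < x) v.

Lemma st_rank v : st v = map (rank v) v.
Proof. by []. Qed.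

Lemma size_st v : size (st v) = size v.
Proof. exact: size_map. Qed.

Lemma nth_st v i : i < size v -> nth 0 (st v) i = rank v (nth 0 v i).
Proof. exact: nth_map. Qed.

Lemma rank_lt_mono v x y : x \in v -> (rank v x < rank v y) = (x < y).
Proof.
move=> xv; case: (ltnP x y) => [lt_xy | le_yx]; last first.
  by apply/negbTE; rewrite -leqNgt; apply: sub_count => z /= /leq_trans; apply.
elim: v xv => //= z v IHv; rewrite inE => /orP[/eqP <- | /IHv lt_v].
  by rewrite ltnn lt_xy add1n ltnS; apply: sub_count => z' /= /ltn_trans; apply.
by move: lt_v; case: (ltnP z x); case: (ltnP z y) => /=; lia.
Qed.

Lemma rank_lt_size v x : x \in v -> rank v x < size v.
Proof.
move=> xv; rewrite -(count_predC (fun y => y < x) v) -addn1 leq_add2l.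
by rewrite -has_count; apply/hasP; exists x; rewrite //= ltnn.
Qed.

Lemma st_map_rank v w : {subset w <= v} -> st (map (rank v) w) = st w.
Proof.
move=> sub_wv; rewrite /st -map_comp; apply/eq_in_map => x xw /=.
by rewrite count_map; apply: eq_in_count => y yw /=; rewrite rank_lt_mono ?sub_wv.
Qed.

Lemma st_take_st n v : st (take n (st v)) = st (take n v).
Proof. by rewrite (st_rank v) -map_take st_map_rank // => x /mem_take. Qed.

Lemma st_drop_st n v : st (drop n (st v)) = st (drop n v).
Proof. by rewrite (st_rank v) -map_drop st_map_rank // => x /mem_drop. Qed.

Lemma st_factor_st j L v : st (factor (st v) j L) = st (factor v j L).
Proof.
by rewrite (st_rank v) /factor -map_drop -map_take st_map_rank // => x /mem_take/mem_drop.
Qed.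

Lemma eq_st a b : size a = size b ->
  st a = st b <->
  {in gtn (size a) &, forall i j, (nth 0 a i < nth 0 a j) = (nth 0 b i < nth 0 b j)}.
Proof.
move=> eq_ab; split => [eq_st_ab i j ia ja | eq_lt].
  have ib : i < size b by rewrite -eq_ab.
  rewrite -(rank_lt_mono _ (mem_nth 0 ia)) -(rank_lt_mono _ (mem_nth 0 ib)).
  by rewrite -!nth_st -?eq_ab // eq_st_ab.
apply: (@eq_from_nth _ 0); rewrite ?size_st // => i ia.
have rank_idx s x : rank s x = count (fun k => nth 0 s k < x) (iota 0 (size s)).
  by rewrite /rank -{1}(mkseq_nth 0 s) count_map.
rewrite !nth_st -?eq_ab // !rank_idx -eq_ab.
by apply: eq_in_count => k; rewrite mem_iota => /= ka; apply: eq_lt.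
Qed.

Lemma count_ltn_iota x n : count (fun y => y < x) (iota 0 n) = minn x n.
Proof.
elim: n => [|n IHn]; first by rewrite minn0.
by rewrite -addn1 iotaD count_cat IHn /=; lia.
Qed.

Lemma st_perm_iota w : perm_eq w (iota 0 (size w)) -> st w = w.
Proof.
move=> w_perm; apply: (@eq_from_nth _ 0); rewrite size_st // => i lt_i.
have /seq.permP eq_count := w_perm.
rewrite nth_st // /rank eq_count count_ltn_iota.
have : nth 0 w i \in iota 0 (size w) by rewrite -(perm_mem w_perm) mem_nth.
by rewrite mem_iota; lia.
Qed.

Lemma st_word n (s : 'S_n) : st (word s) = word s.
Proof. by apply: st_perm_iota; rewrite size_word word_perm_iota. Qed.

Lemma st_map_nth_perm a ix : perm_eq ix (iota 0 (size a)) ->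
  st [seq nth 0 a i | i <- ix] = [seq nth 0 (st a) i | i <- ix].
Proof.
move=> ix_perm; have /seq.permP eq_count : perm_eq [seq nth 0 a i | i <- ix] a.
  by rewrite -{2}(mkseq_nth 0 a); apply: perm_map.
rewrite /st -map_comp; apply/eq_in_map => i i_ix /=.
rewrite (nth_map 0) ?eq_count //.
by move: i_ix; rewrite (perm_mem ix_perm) mem_iota.
Qed.

Lemma rank_inj v : {in v &, injective (rank v)}.
Proof.
move=> x y xv yv eq_rank; apply/eqP; rewrite eqn_leq.
rewrite leqNgt -(rank_lt_mono _ yv) eq_rank ltnn /=.
by rewrite leqNgt -(rank_lt_mono _ xv) eq_rank ltnn.
Qed.

Lemma exists_perm_st L w : size w = L -> uniq w -> exists u : 'S_L, word u = st w.
Proof.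
move=> <- {L} w_uniq.
have rank_lt (i : 'I_(size w)) : rank w (nth 0 w i) < size w.
  exact/rank_lt_size/mem_nth.
have rank_nth_inj : injective (fun i => Ordinal (rank_lt i)).
  move=> i j /(congr1 val) /= /rank_inj eq_nth; apply/val_inj/eqP.
  by rewrite /= -(nth_uniq 0 _ _ w_uniq) // eq_nth ?mem_nth.
exists (perm rank_nth_inj); apply: (@eq_from_nth _ 0); rewrite size_word ?size_st // => i lt_i.
by rewrite -[i]/(val (Ordinal lt_i)) nth_word permE nth_st.
Qed.

Lemma exists_perm_word n w : perm_eq w (iota 0 n) -> exists r : 'S_n, word r = w.
Proof.
move=> w_perm; have size_w : size w = n by rewrite (perm_size w_perm) size_iota.
have [r r_w] := exists_perm_st size_w (etrans (perm_uniq w_perm) (iota_uniq 0 n)).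
by exists r; rewrite r_w st_perm_iota // size_w.
Qed.

Lemma size_factor w j L : j + L <= size w -> size (factor w j L) = L.
Proof. by move=> le_w; rewrite size_takel // size_drop; lia. Qed.

Lemma nth_factor w j L k : k < L -> nth 0 (factor w j L) k = nth 0 w (j + k).
Proof. by move=> lt_k; rewrite nth_take // nth_drop. Qed.

Lemma factor_factor w j L a b : a + b <= L ->
  factor (factor w j L) a b = factor w (j + a) b.
Proof.
move=> le_L; rewrite /factor take_drop take_takel; last by rewrite addnC.
by rewrite -take_drop drop_drop addnC.
Qed.

Lemma factor_uniq w j L : uniq w -> uniq (factor w j L).
Proof. by move=> w_uniq; rewrite take_uniq // drop_uniq. Qed.

Lemma map_factor (f : nat -> nat) w j L : factor (map f w) j L = map f (factor w j L).
Proof. by rewrite /factor -map_drop -map_take. Qed.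

Lemma exists_window_perm n j L (rho : 'S_L) : j + L <= n ->
  exists r : 'S_n, factor (word r) j L = [seq j + k | k <- word rho].
Proof.
move=> le_n; set mid := [seq j + k | k <- word rho]; set rest := n - (j + L).
have size_mid : size mid = L by rewrite size_map size_word.
have [r r_word] : exists r : 'S_n, word r = iota 0 j ++ mid ++ iota (j + L) rest.
  apply: exists_perm_word; rewrite -(subnKC le_n) -/rest !iotaD !add0n -catA.
  rewrite perm_cat2l perm_cat2r -[in iota j L](addn0 j) iotaDl.
  exact/perm_map/word_perm_iota.
by exists r; rewrite /factor r_word drop_size_cat ?size_iota // take_size_cat.
Qed.

Definition factor_class n j L (u : 'S_L) : {set 'S_n} :=
  [set s : 'S_n | st (factor (word s) j L) == word u].

Lemma card_factor_class n j L (u v : 'S_L) : j + L <= n ->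
  #|factor_class n j u| = #|factor_class n j v|.
Proof.
move=> le_n; wlog suffices le_uv : u v / #|factor_class n j u| <= #|factor_class n j v|.
  by apply/eqP; rewrite eqn_leq !le_uv.
have [r r_window] := exists_window_perm (v * u^-1)%g le_n.
rewrite -(card_imset _ (mulgI r)); apply/subset_leq_card/subsetP => _ /imsetP[s + ->].
rewrite !inE => /eqP s_u; rewrite word_mul map_factor r_window -map_comp.
have size_s : size (factor (word s) j L) = L by rewrite size_factor ?size_word.
rewrite (_ : map _ _ = [seq nth 0 (factor (word s) j L) k | k <- word (v * u^-1)]); last first.
  apply/eq_in_map => k; rewrite (perm_mem (word_perm_iota _)) mem_iota => /= lt_k.
  by rewrite nth_factor.
rewrite st_map_nth_perm ?size_s ?word_perm_iota // s_u -word_mul.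
by rewrite mulgKV.
Qed.

Definition class_size n j L : nat := #|factor_class n j (1 : 'S_L)|.

Lemma card_set_sum (T : finType) (P : pred T) : #|[set x | P x]| = \sum_x P x.
Proof. by rewrite -sum1dep_card big_mkcond. Qed.

Lemma eq_sum_leq (I : finType) (E1 E2 : I -> nat) :
  (forall i, E1 i <= E2 i) -> \sum_i E1 i = \sum_i E2 i -> E1 =1 E2.
Proof.
move=> le_E eq_sum i; have := (leqif_sum (fun i (_ : true) => leqif_eq (le_E i))).2.
by rewrite eq_sum eqxx => /esym/forall_inP/(_ i isT)/eqP.
Qed.

Section Occurrences.

Variables (m : nat) (p : 'S_m).

Definition occurs_at (w : seq nat) j : bool := st (factor w j m) == word p.

Definition pair_count n j j' : nat :=
  #|[set s : 'S_n | occurs_at (word s) j && occurs_at (word s) j']|.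

Definition overlap_count e : nat := pair_count (m + e) 0 e.

Lemma occurs_at_st w j : occurs_at (st w) j = occurs_at w j.
Proof. by rewrite /occurs_at st_factor_st. Qed.

Lemma pair_countC n j j' : pair_count n j j' = pair_count n j' j.
Proof. by apply: eq_card => s; rewrite !inE andbC. Qed.

Lemma pair_count_shift n j e : j + (m + e) <= n ->
  pair_count n j (j + e) = overlap_count e * class_size n j (m + e).
Proof.
move=> le_n; pose Q (u : 'S_(m + e)) := occurs_at (word u) 0 && occurs_at (word u) e.
have pair_sum (s : 'S_n) : occurs_at (word s) j && occurs_at (word s) (j + e) =
    \sum_u Q u * (s \in factor_class n j u) :> nat.
  set x := factor (word s) j (m + e).
  have size_x : size x = m + e by rewrite size_factor ?size_word.
  have [u0 u0_x] := exists_perm_st size_x (factor_uniq _ _ (word_uniq s)).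
  have occ_u0 k : k <= e -> occurs_at (word u0) k = occurs_at (word s) (j + k).
    by move=> le_k; rewrite u0_x occurs_at_st /occurs_at /x factor_factor //; lia.
  rewrite -[in occurs_at _ j](addn0 j) -!occ_u0 // (bigD1 u0) //= big1 => [|u ne_u].
    by rewrite inE -/x -u0_x eqxx muln1 addn0.
  by rewrite inE -/x -u0_x (inj_eq (@word_inj _)) eq_sym (negbTE ne_u) muln0.
rewrite /pair_count card_set_sum (eq_bigr _ (fun s _ => pair_sum s)) exchange_big /=.
rewrite /overlap_count /pair_count card_set_sum big_distrl /=; apply: eq_bigr => u _.
by rewrite -big_distrr /= -card_set_sum cardsE (card_factor_class _ 1 le_n).
Qed.

Lemma size_Em e (s : 'S_(m + e)) :
  size (Em p s) = \sum_(j < e.+1) occurs_at (word s) j.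
Proof.
rewrite /Em leq_addr size_filter addKn addn1 -sum1_count big_mkcond.
by rewrite -[iota 0 e.+1]/(index_iota 0 e.+1) big_mkord.
Qed.

Lemma sum_size_Em n (f : nat -> nat) :
  \sum_(s : 'S_n) f (size (Em p s)) = \sum_(k < n.+2) f k * a_count p n k.
Proof.
have size_lt (s : 'S_n) : size (Em p s) < n.+2.
  by rewrite ltnS size_filter (leq_trans (count_size _ _)) // size_iota; lia.
rewrite (partition_big (fun s => Ordinal (size_lt s)) xpredT) //=.
apply: eq_bigr => k _; rewrite (eq_bigr (fun _ => f k)) => [|s /eqP <- //].
by rewrite sum_nat_cond_const mulnC /a_count.
Qed.

Lemma second_moment e :
  \sum_(s : 'S_(m + e)) size (Em p s) ^ 2 =
  \sum_(j < e.+1) \sum_(j' < e.+1) pair_count (m + e) j j'.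
Proof.
under eq_bigr => s _ do rewrite size_Em expnS expn1 big_distrlr /=.
rewrite exchange_big; apply: eq_bigr => j _; rewrite exchange_big; apply: eq_bigr => j' _.
by rewrite /pair_count card_set_sum; apply: eq_bigr => s _; rewrite mulnb.
Qed.

End Occurrences.

Lemma second_moment_eq m (p t : 'S_m) e : strongly_cWilf_equiv p t ->
  \sum_(j < e.+1) \sum_(j' < e.+1) pair_count p (m + e) j j' =
  \sum_(j < e.+1) \sum_(j' < e.+1) pair_count t (m + e) j j'.
Proof.
move=> pt; rewrite -!second_moment !(sum_size_Em _ _ (fun k => k ^ 2)).
by apply: eq_bigr => k _; rewrite pt.
Qed.

Lemma pair_count_mono m (p t : 'S_m) e :
  (forall k, k <= e -> overlap_count p k <= overlap_count t k) ->
  forall j j', j <= e -> j' <= e -> pair_count p (m + e) j j' <= pair_count t (m + e) j j'.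
Proof.
move=> le_pt j j'; wlog le_jj' : j j' / j <= j'.
  move=> wlog_le le_j le_j'; case: (leqP j j') => [|/ltnW] le; first exact: wlog_le.
  by rewrite !(pair_countC _ _ j); apply: wlog_le.
move=> _ le_j'; rewrite -(subnKC le_jj') !pair_count_shift; try lia.
by rewrite leq_mul2r le_pt ?orbT //; lia.
Qed.

Lemma overlap_count_eq_step m (p t : 'S_m) e : strongly_cWilf_equiv p t ->
  (forall k, k < e -> overlap_count p k = overlap_count t k) ->
  overlap_count p e <= overlap_count t e -> overlap_count p e = overlap_count t e.
Proof.
move=> pt eq_lt le_e.
have le_pt k : k <= e -> overlap_count p k <= overlap_count t k.
  by rewrite leq_eqVlt => /orP[/eqP -> // | /eq_lt ->].
have le_pair (j j' : 'I_e.+1) : pair_count p (m + e) j j' <= pair_count t (m + e) j j'.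
  by apply: pair_count_mono; rewrite // -ltnS.
have le_row (j : 'I_e.+1) : \sum_(j' < e.+1) pair_count p (m + e) j j' <=
                \sum_(j' < e.+1) pair_count t (m + e) j j'.
  by apply: leq_sum => j' _; apply: le_pair.
have eq_row := eq_sum_leq le_row (second_moment_eq e pt).
exact: eq_sum_leq (le_pair ord0) (eq_row ord0) ord_max.
Qed.

Lemma overlap_count_eq m (p t : 'S_m) : strongly_cWilf_equiv p t ->
  overlap_count p =1 overlap_count t.
Proof.
move=> pt e; elim/ltn_ind: e => e IHe.
have tp : strongly_cWilf_equiv t p by move=> n k; rewrite pt.
case: (leqP (overlap_count p e) (overlap_count t e)) => [|/ltnW] le.
  exact: overlap_count_eq_step.
by symmetry; apply: overlap_count_eq_step => // k /IHe.
Qed.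

Lemma nth_word_lt n (s : 'S_n) i : i < n -> nth 0 (word s) i < n.
Proof. by move=> lt_i; rewrite -[i]/(val (Ordinal lt_i)) nth_word. Qed.

Lemma nth_word_inj n (s : 'S_n) : {in gtn n &, injective (nth 0 (word s))}.
Proof.
by move=> i j lt_i lt_j /eqP; rewrite nth_uniq ?size_word ?word_uniq // => /eqP.
Qed.

Lemma lt_iso_inj (A : pred nat) (f g : nat -> nat) :
  {in A &, forall i j, (f i < f j) = (g i < g j)} -> {in A &, injective g} ->
  {in A &, injective f}.
Proof.
move=> fg g_inj i j iA jA eq_f; apply: g_inj => //; apply/eqP.
by rewrite eqn_leq leqNgt -fg // eq_f ltnn /= leqNgt -fg // eq_f ltnn.
Qed.

Section Amalgamation.

Variables (m l d : nat) (p : 'S_m) (q : 'S_l).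
Hypotheses (le_dm : d <= m) (le_m : m <= d + l).
Hypothesis overlap : st (drop d (word p)) = st (take (m - d) (word q)).

Local Notation x i := (nth 0 (word p) i).
Local Notation y i := (nth 0 (word q) i).

Lemma amalgam_overlap_lt :
  {in gtn (m - d) &, forall i j, (x (d + i) < x (d + j)) = (y i < y j)}.
Proof.
have size_drop_p : size (drop d (word p)) = m - d by rewrite size_drop size_word.
have size_take_q : size (take (m - d) (word q)) = m - d.
  by rewrite size_takel // size_word; lia.
move: overlap; rewrite eq_st ?size_drop_p ?size_take_q // => eq_lt i j lt_i lt_j.
by rewrite -!nth_drop eq_lt ?size_drop_p // !nth_take.
Qed.

(* The first window gets the keys (x i).+1 * l.+1, ordered as p.  A position
   i >= m of the second window gets low digit (y (i - d)).+1 < l.+1 under the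
   high digit amalgam_low (i - d), which puts it just above every first-window
   position lying below it in the order of q. *)
Definition amalgam_low k := \max_(i < m - d | y i < y k) (x (d + i)).+1.

Definition amalgam_key i :=
  if i < m then (x i).+1 * l.+1 else amalgam_low (i - d) * l.+1 + (y (i - d)).+1.

Local Notation low := amalgam_low.
Local Notation key := amalgam_key.

Lemma amalgam_key_lt_take i i' : i < m -> i' < m -> (key i < key i') = (x i < x i').
Proof. by move=> lt_i lt_i'; rewrite /key lt_i lt_i' ltn_pmul2r. Qed.

Lemma amalgam_key_lt_drop_of k k' :
  k < l -> k' < l -> y k < y k' -> key (d + k) < key (d + k').
Proof.
move=> lt_k lt_k' lt_y; have y_lt := nth_word_lt q lt_k.
rewrite /key !addKn; case: (ltnP (d + k) m) => lt_i; case: (ltnP (d + k') m) => lt_i'.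
- by rewrite ltn_pmul2r // ltnS amalgam_overlap_lt // inE; lia.
- have lt_km : k < m - d by lia.
  have x_le_low : (x (d + k)).+1 <= low k'.
    exact: (@leq_bigmax_cond _ _ (fun i : 'I_(m - d) => (x (d + i)).+1) (Ordinal lt_km)).
  by have := leq_mul x_le_low (leqnn l.+1); lia.
- have low_lt_x : low k < (x (d + k')).+1.
    rewrite ltnS; apply/bigmax_leqP => i lt_yi.
    by rewrite amalgam_overlap_lt ?(ltn_trans lt_yi) ?inE //; lia.
  by have := leq_mul low_lt_x (leqnn l.+1); rewrite mulSn; lia.
- have low_le : low k <= low k'.
    apply/bigmax_leqP => i lt_yi.
    exact: (leq_bigmax_cond i (ltn_trans lt_yi lt_y)).
  by have := leq_mul low_le (leqnn l.+1); lia.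
Qed.

Lemma amalgam_key_lt_drop k k' :
  k < l -> k' < l -> (key (d + k) < key (d + k')) = (y k < y k').
Proof.
move=> lt_k lt_k'; case: (ltngtP (y k) (y k')) => [lt_y | gt_y | eq_y].
- exact: amalgam_key_lt_drop_of.
- by apply/negbTE; rewrite -leqNgt ltnW // amalgam_key_lt_drop_of.
- by rewrite (nth_word_inj lt_k lt_k' eq_y) ltnn.
Qed.

Lemma amalgam_key_mod i : i < d + l -> key i %% l.+1 = if i < m then 0 else (y (i - d)).+1.
Proof.
move=> lt_i; rewrite /key; case: ltnP => [_ | le_mi]; first exact: modnMl.
by rewrite modnMDl modn_small // ltnS nth_word_lt //; lia.
Qed.

Lemma amalgam_key_inj : {in gtn (d + l) &, injective key}.
Proof.
move=> i i'; rewrite !inE => lt_i lt_i' eq_key.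
case: (boolP ((i < m) && (i' < m))) => [/andP[lt_im lt_i'm] | not_first].
  by apply: (lt_iso_inj (A := gtn m) amalgam_key_lt_take (@nth_word_inj m p)).
case: (boolP ((d <= i) && (d <= i'))) => [/andP[le_di le_di'] | not_second].
  rewrite -(subnKC le_di) -(subnKC le_di') in eq_key *; congr (d + _).
  have := lt_iso_inj (A := gtn l) amalgam_key_lt_drop (@nth_word_inj l q).
  by apply=> //; rewrite inE; lia.
have := amalgam_key_mod lt_i; have := amalgam_key_mod lt_i'; rewrite eq_key.
by move: not_first not_second; case: (ltnP i m); case: (ltnP i' m); lia.
Qed.

Lemma amalgamation :
  exists w, [/\ uniq w, size w = d + l, st (take m w) = word p & st (drop d w) = word q].
Proof.
exists (mkseq key (d + l)); split.
- rewrite map_inj_in_uniq ?iota_uniq // => i j; rewrite !mem_iota !add0n => lt_i lt_j.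
  exact: amalgam_key_inj.
- exact: size_mkseq.
- rewrite -[word p]st_word; apply/eq_st; rewrite size_takel ?size_mkseq ?size_word //.
  move=> i j; rewrite !inE => lt_i lt_j.
  by rewrite !nth_take // !nth_mkseq ?amalgam_key_lt_take //; lia.
- rewrite -[word q]st_word; apply/eq_st; rewrite size_drop size_mkseq ?size_word addKn //.
  move=> k k'; rewrite !inE => lt_k lt_k'.
  by rewrite !nth_drop !nth_mkseq ?amalgam_key_lt_drop //; lia.
Qed.

End Amalgamation.

Lemma overlap_count_gt0 m (p : 'S_m) d : d <= m ->
  (0 < overlap_count p d) = (st (drop d (word p)) == st (take (m - d) (word p))).
Proof.
move=> le_dm; apply/idP/eqP => [|overlap].
  rewrite card_gt0 => /set0Pn[u]; rewrite inE => /andP[/eqP occ0 /eqP occd].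
  rewrite -{1}occ0 -occd st_drop_st st_take_st /factor drop0 take_takel ?leq_subr //.
  by rewrite take_drop subnK.
have [w [w_uniq size_w st_w_p st_w_q]] := amalgamation le_dm (leq_addl d m) overlap.
rewrite addnC in size_w; have [u u_w] := exists_perm_st size_w w_uniq.
rewrite card_gt0; apply/set0Pn; exists u.
rewrite inE u_w !occurs_at_st /occurs_at /factor drop0 st_w_p take_oversize ?st_w_q ?eqxx //.
by rewrite size_drop size_w addnK.
Qed.

Theorem corollary2p3 (m : nat) (p t : 'S_m) :
  strongly_cWilf_equiv p t -> overlap_set p = overlap_set t.
Proof.
move=> pt; apply/setP => i; rewrite !inE.
by rewrite -!overlap_count_gt0 ?(ltnW (ltn_ord i)) // (overlap_count_eq pt).
Qed.
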